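(* Let $\mu>0$, $u_a\in\mathbb{R}$, $\omega_0\ge0$, $\sigma_0\in\mathbb{R}$, and let $\alpha_l,\alpha_r,u_l,u_r$ be continuous functions on $[0,\infty)$ with $\alpha_l(t),\alpha_r(t)>0$ and $u_l(t)>u_r(t)$ for all $t\ge0$. Suppose $(\omega,\sigma)\in\mathcal{C}^1([0,\infty))^2$ solves $$\frac{d\omega}{dt}=(\alpha_r-\alpha_l)\sigma-(\alpha_ru_r-\alpha_lu_l),\quad \frac{d(\omega\sigma)}{dt}=(\alpha_ru_r-\alpha_lu_l)\sigma-(\alpha_ru_r^2-\alpha_lu_l^2)+\mu(u_a-\sigma)\omega,$$ with $\omega(0)=\omega_0$, $\sigma(0)\omega(0)=\sigma_0\omega_0$. If $u_r(t)<\sigma(t)<u_l(t)$ for all $t\ge0$, then $\omega(t_2)>\omega(t_1)$ whenever $t_2>t_1\ge0$. In particular, in the Riemann case $\alpha_l\equiv\alpha_->0$, $\alpha_r\equiv\alpha_+>0$, $u_l(t)=u_a+(u_--u_a)e^{-\mu t}$, $u_r(t)=u_a+(u_+-u_a)e^{-\mu t}$ with $u_->u_+$, one has $\omega(t)\ge\omega_0+\frac{K(1-e^{-\mu t})}{\mu}$ for all $t\ge0$, where $K=\min\{\alpha_-,\alpha_+\}(u_--u_+)$. *)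

From Stdlib Require Import Reals.
Open Scope R_scope.

Definition cont_nonneg (f : R -> R) : Prop :=
  forall t, 0 <= t -> forall eps, 0 < eps -> exists delta, 0 < delta /\
    forall s, 0 <= s -> Rabs (s - t) < delta -> Rabs (f s - f t) < eps.

Definition has_deriv_nonneg (f f' : R -> R) : Prop :=
  forall t, 0 <= t -> forall eps, 0 < eps -> exists delta, 0 < delta /\
    forall h, h <> 0 -> Rabs h < delta -> 0 <= t + h ->
      Rabs ((f (t + h) - f t) / h - f' t) < eps.

Definition C1_nonneg (f : R -> R) : Prop :=
  exists f', has_deriv_nonneg f f' /\ cont_nonneg f'.

Definition solves (mu ua om0 sig0 : R) (al ar ul ur om sig : R -> R) : Prop :=
  C1_nonneg om /\ C1_nonneg sig /\
  has_deriv_nonneg om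
    (fun t => (ar t - al t) * sig t - (ar t * ur t - al t * ul t)) /\
  has_deriv_nonneg (fun t => om t * sig t)
    (fun t => (ar t * ur t - al t * ul t) * sig t
              - (ar t * (ur t)^2 - al t * (ul t)^2)
              + mu * (ua - sig t) * om t) /\
  om 0 = om0 /\ sig 0 * om 0 = sig0 * om0.

(* The left-hand side of the first equation is the speed of ω, and it rewrites
   as α_r (σ - u_r) + α_l (u_l - σ), a sum of two positive terms while
   u_r < σ < u_l; a mean value theorem for one-sided derivatives on [0, ∞)
   then gives strict monotonicity of ω.  In the Riemann case the same
   expression is at least min(α_-, α_+) (u_l - u_r) = K e^{-μt}, so
   ω(t) - K (1 - e^{-μt}) / μ has a nonnegative derivative and is
   nondecreasing. *)

From Stdlib Require Import Reals Lra.
From Coquelicot Require Import Coquelicot.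
Open Scope R_scope.

Section OneSidedCalculus.

Variables f f' : R -> R.
Hypothesis f_deriv : has_deriv_nonneg f f'.

Lemma has_deriv_nonneg_local_lipschitz x : 0 <= x ->
  exists d, 0 < d /\ forall y, 0 <= y -> Rabs (y - x) < d ->
    Rabs (f y - f x) <= (Rabs (f' x) + 1) * Rabs (y - x).
Proof.
  intros Hx. destruct (f_deriv x Hx 1 ltac:(lra)) as [d [Hd0 H]].
  exists d; split; [exact Hd0|]. intros y Hy Hyx.
  destruct (Req_dec y x) as [->|Hne].
  { rewrite !Rminus_diag, !Rabs_R0. lra. }
  set (h := y - x). assert (Hh : h <> 0) by (unfold h; lra).
  specialize (H h Hh Hyx ltac:(unfold h; lra)).
  replace (x + h) with y in H by (unfold h; ring).
  assert (Hq : Rabs ((f y - f x) / h) < Rabs (f' x) + 1).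
  { pose proof (Rabs_triang ((f y - f x) / h - f' x) (f' x)) as Htri.
    replace ((f y - f x) / h - f' x + f' x) with ((f y - f x) / h) in Htri by ring.
    lra. }
  replace (f y - f x) with ((f y - f x) / h * h) by (field; exact Hh).
  rewrite Rabs_mult. apply Rmult_le_compat_r; [apply Rabs_pos | lra].
Qed.

(* Clamping the argument at 0 extends [f] to a function on all of R that is
   continuous on [0, ∞), so that the two-sided MVT of Coquelicot applies. *)
Let f_clamped x := f (Rmax x 0).

Lemma clamped_eq x : 0 <= x -> f_clamped x = f x.
Proof. intros Hx. unfold f_clamped. now rewrite Rmax_left. Qed.

Lemma clamped_derivable x : 0 < x -> derivable_pt_lim f_clamped x (f' x).
Proof.
  intros Hx eps Heps.
  destruct (f_deriv x ltac:(lra) eps Heps) as [d [Hd0 H]].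
  assert (Hm : 0 < Rmin d x) by (apply Rmin_pos; lra).
  exists (mkposreal _ Hm). intros h Hh Hhd. simpl in Hhd.
  pose proof (Rmin_l d x); pose proof (Rmin_r d x).
  assert (Hxh : 0 <= x + h) by (apply Rabs_def2 in Hhd; lra).
  rewrite (clamped_eq _ Hxh), (clamped_eq x ltac:(lra)).
  apply H; [exact Hh | lra | exact Hxh].
Qed.

Lemma clamped_continuous x : 0 <= x -> continuity_pt f_clamped x.
Proof.
  intros Hx. destruct (has_deriv_nonneg_local_lipschitz x Hx) as [d [Hd0 H]].
  set (C := Rabs (f' x) + 1).
  assert (HC : 0 < C) by (unfold C; pose proof (Rabs_pos (f' x)); lra).
  intros eps Heps.
  exists (Rmin d (eps / C)); split.
  { apply Rmin_pos; [lra | apply Rdiv_lt_0_compat; lra]. }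
  intros y [_ Hy]. simpl in *. unfold R_dist in *.
  pose proof (Rmin_l d (eps / C)); pose proof (Rmin_r d (eps / C)).
  rewrite (clamped_eq x Hx).
  assert (Hclose : Rabs (Rmax y 0 - x) <= Rabs (y - x)).
  { unfold Rmax; destruct (Rle_dec y 0); [rewrite !Rabs_left1 by lra|]; lra. }
  eapply Rle_lt_trans; [apply (H (Rmax y 0) (Rmax_r y 0)); lra|].
  replace eps with (C * (eps / C)) by (field; lra).
  apply Rmult_lt_compat_l; lra.
Qed.

Lemma MVT_nonneg a b : 0 <= a -> a < b ->
  exists c, a <= c <= b /\ f b - f a = f' c * (b - a).
Proof.
  intros Ha Hab.
  destruct (MVT_gen f_clamped a b f') as [c [Hc Heq]];
    rewrite ?Rmin_left, ?Rmax_right in * by lra.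
  - intros x Hx. apply is_derive_Reals, clamped_derivable. lra.
  - intros x Hx. apply clamped_continuous. lra.
  - exists c; split; [exact Hc|].
    now rewrite <- (clamped_eq b), <- (clamped_eq a) by lra.
Qed.

Lemma has_deriv_nonneg_increasing :
  (forall t, 0 <= t -> 0 < f' t) ->
  forall a b, 0 <= a -> a < b -> f a < f b.
Proof.
  intros Hpos a b Ha Hab.
  destruct (MVT_nonneg a b Ha Hab) as [c [Hc Heq]].
  pose proof (Rmult_lt_0_compat _ _ (Hpos c ltac:(lra)) (proj2 (Rlt_0_minus a b) Hab)).
  lra.
Qed.

Lemma has_deriv_nonneg_nondecreasing :
  (forall t, 0 <= t -> 0 <= f' t) ->
  forall a b, 0 <= a -> a <= b -> f a <= f b.
Proof.
  intros Hnn a b Ha Hab.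
  destruct (Req_dec a b) as [->|Hne]; [lra|].
  destruct (MVT_nonneg a b Ha ltac:(lra)) as [c [Hc Heq]].
  pose proof (Rmult_le_pos _ _ (Hnn c ltac:(lra)) (Rge_le _ _ (Rge_minus b a ltac:(lra)))).
  lra.
Qed.

Lemma has_deriv_nonneg_minus (g g' : R -> R) :
  (forall t, derivable_pt_lim g t (g' t)) ->
  has_deriv_nonneg (fun t => f t - g t) (fun t => f' t - g' t).
Proof.
  intros Hg s Hs eps Heps.
  destruct (Hg s (eps / 2) ltac:(lra)) as [d1 Hd1].
  destruct (f_deriv s Hs (eps / 2) ltac:(lra)) as [d2 [Hd2 H2]].
  exists (Rmin d1 d2); split; [apply Rmin_pos; [apply cond_pos | lra]|].
  intros h Hh Hhd Hsh.
  pose proof (Rmin_l d1 d2); pose proof (Rmin_r d1 d2).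
  specialize (Hd1 h Hh ltac:(lra)). specialize (H2 h Hh ltac:(lra) Hsh).
  replace ((f (s + h) - g (s + h) - (f s - g s)) / h - (f' s - g' s))
    with (((f (s + h) - f s) / h - f' s) + - ((g (s + h) - g s) / h - g' s))
    by (field; exact Hh).
  pose proof (Rabs_triang ((f (s + h) - f s) / h - f' s)
                          (- ((g (s + h) - g s) / h - g' s))) as Htri.
  rewrite Rabs_Ropp in Htri. lra.
Qed.

End OneSidedCalculus.

Lemma omega_speed_eq al ar ul ur s :
  (ar - al) * s - (ar * ur - al * ul) = ar * (s - ur) + al * (ul - s).
Proof. ring. Qed.

Lemma omega_speed_pos al ar ul ur s :
  0 < al -> 0 < ar -> ur < s < ul ->
  0 < (ar - al) * s - (ar * ur - al * ul).
Proof.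
  intros Hl Hr Hs. rewrite omega_speed_eq.
  apply Rplus_lt_0_compat; apply Rmult_lt_0_compat; lra.
Qed.

Lemma omega_speed_ge_min al ar ul ur s :
  0 < al -> 0 < ar -> ur <= s <= ul ->
  Rmin al ar * (ul - ur) <= (ar - al) * s - (ar * ur - al * ul).
Proof.
  intros Hl Hr Hs. rewrite omega_speed_eq.
  pose proof (Rmin_l al ar); pose proof (Rmin_r al ar).
  replace (Rmin al ar * (ul - ur))
    with (Rmin al ar * (s - ur) + Rmin al ar * (ul - s)) by ring.
  nra.
Qed.

Lemma derivable_pt_lim_exp_integral K mu t : 0 < mu ->
  derivable_pt_lim (fun s => K * (1 - exp (- mu * s)) / mu) t
    (K * exp (- mu * t)).
Proof.
  intros Hmu. apply is_derive_Reals. auto_derive; [exact I|]. field. lra.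
Qed.

Theorem mainTheorem12 :
  (forall (mu ua om0 sig0 : R) (al ar ul ur om sig : R -> R),
    0 < mu -> 0 <= om0 ->
    cont_nonneg al -> cont_nonneg ar -> cont_nonneg ul -> cont_nonneg ur ->
    (forall t, 0 <= t -> 0 < al t /\ 0 < ar t /\ ur t < ul t) ->
    solves mu ua om0 sig0 al ar ul ur om sig ->
    (forall t, 0 <= t -> ur t < sig t < ul t) ->
    forall t1 t2, 0 <= t1 -> t1 < t2 -> om t1 < om t2)
  /\
  (forall (mu ua om0 sig0 am ap um up : R) (om sig : R -> R),
    0 < mu -> 0 <= om0 -> 0 < am -> 0 < ap -> up < um ->
    let al := fun _ : R => am in
    let ar := fun _ : R => ap in
    let ul := fun t => ua + (um - ua) * exp (- mu * t) in
    let ur := fun t => ua + (up - ua) * exp (- mu * t) in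
    solves mu ua om0 sig0 al ar ul ur om sig ->
    (forall t, 0 <= t -> ur t < sig t < ul t) ->
    forall t, 0 <= t ->
      om t >= om0 + Rmin am ap * (um - up) * (1 - exp (- mu * t)) / mu).
Proof.
  split.
  - intros mu ua om0 sig0 al ar ul ur om sig _ _ _ _ _ _ Hcoef
      [_ [_ [Hom _]]] Hsig.
    apply (has_deriv_nonneg_increasing _ _ Hom). intros t Ht.
    destruct (Hcoef t Ht) as [Hl [Hr _]].
    exact (omega_speed_pos _ _ _ _ _ Hl Hr (Hsig t Ht)).
  - intros mu ua om0 sig0 am ap um up om sig Hmu _ Ham Hap _ al ar ul ur
      [_ [_ [Hom [_ [Hom0 _]]]]] Hsig t Ht.
    set (K := Rmin am ap * (um - up)).
    pose proof (has_deriv_nonneg_minus _ _ Hom _ _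
      (fun s => derivable_pt_lim_exp_integral K mu s Hmu)) as Hg.
    assert (Hg_slope : forall s, 0 <= s ->
      0 <= (ar s - al s) * sig s - (ar s * ur s - al s * ul s)
           - K * exp (- mu * s)).
    { intros s Hs. destruct (Hsig s Hs) as [Hr Hl].
      pose proof (omega_speed_ge_min am ap (ul s) (ur s) (sig s) Ham Hap
        ltac:(lra)) as Hspeed.
      replace (ul s - ur s) with ((um - up) * exp (- mu * s)) in Hspeed
        by (unfold ul, ur; ring).
      unfold K, al, ar. lra. }
    pose proof (has_deriv_nonneg_nondecreasing _ _ Hg Hg_slope 0 t (Rle_refl 0) Ht)
      as Hmono.
    cbv beta in Hmono.
    rewrite Hom0, Rmult_0_r, exp_0, Rminus_diag, Rmult_0_r, Rdiv_0_l in Hmono.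
    lra.
Qed.
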